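(* Let $G$ be an undirected graph and let $W$ be any walk in $G$. Then there exists a walk in $G$ that traverses exactly the same set of edges as $W$ and traverses each of these edges at most twice.
   Context: A walk is a sequence of vertices $v_0,\dots,v_t$ with consecutive vertices adjacent; it traverses the edges $\{v_{j-1},v_j\}$. *)

From mathcomp Require Import all_boot.
Set Implicit Arguments. Unset Strict Implicit. Unset Printing Implicit Defensive.

(* An undirected graph on vertex type T is a symmetric relation e : rel T
   (edges are unordered pairs {x,y} with e x y).  A walk v_0,...,v_t is
   represented as the nonempty sequence v_0 :: vs with path e v_0 vs. *)
Definition is_walk (T : eqType) (e : rel T) (v0 : T) (vs : seq T) : bool :=
  path e v0 vs.

Definition walk_steps (T : eqType) (v0 : T) (vs : seq T) : seq (T * T) :=
  zip (v0 :: vs) vs.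

Definition edge_mult (T : eqType) (v0 : T) (vs : seq T) (x y : T) : nat :=
  count (fun p => (p == (x, y)) || (p == (y, x))) (walk_steps v0 vs).

From mathcomp Require Import all_boot zify.
Set Implicit Arguments. Unset Strict Implicit. Unset Printing Implicit Defensive.

(* If an edge {u,w} is traversed at least three times, some direction (u,w)
   is used twice, so the walk reads P u w Q u w R.  The walk P u (rev Q) w R
   still traverses every edge of the original one (the detour w Q u is merely
   run backwards) and traverses {u,w} exactly twice less, hence still at least
   once; a loop {u,u} can instead be cut out once.  Repeating this on shorter
   and shorter walks ends with every edge traversed at most twice. *)

Section Walks.

Variable T : eqType.
Implicit Types (s P Q R : seq T) (u w x y : T).

Definition steps s : seq (T * T) := zip s (behead s).

Definition traverses x y : pred (T * T) :=
  fun p => (p == (x, y)) || (p == (y, x)).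

Definition traversals s x y : nat := count (traverses x y) (steps s).

Lemma steps_cons2 u w s : steps [:: u, w & s] = (u, w) :: steps (w :: s).
Proof. by []. Qed.

Lemma steps_cat P u R : steps (P ++ u :: R) = steps (rcons P u) ++ steps (u :: R).
Proof.
elim: P => [|a [|b P] IH] //.
by rewrite cat_cons steps_cons2 IH.
Qed.

Lemma steps_rev s : steps (rev s) = rev [seq (p.2, p.1) | p <- steps s].
Proof.
elim: s => [|a [|b s] IH] //.
rewrite steps_cons2 map_cons rev_cons -cats1 [in RHS]rev_cons -IH rev_cons.
by rewrite cat_rcons steps_cat cats1.
Qed.

Lemma traversals_rev s x y : traversals (rev s) x y = traversals s x y.
Proof.
rewrite /traversals steps_rev count_rev count_map; apply: eq_count => -[a b].
by rewrite /traverses /= !xpair_eqE orbC andbC [(b == x) && _]andbC.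
Qed.

Lemma traversalsC s x y : traversals s x y = traversals s y x.
Proof. by apply: eq_count => p; rewrite /traverses orbC. Qed.

Lemma traversals_traverses s x y p :
  traverses x y p -> traversals s x y = traversals s p.1 p.2.
Proof. by case/orP => /eqP -> //=; rewrite traversalsC. Qed.

Lemma steps_split s u w :
  0 < count (pred1 (u, w)) (steps s) ->
  exists P R, s = P ++ [:: u, w & R] /\
    count (pred1 (u, w)) (steps s) = (count (pred1 (u, w)) (steps (w :: R))).+1.
Proof.
elim: s => [|a [|b s] IH] //; rewrite steps_cons2 /=.
have [[-> ->] _|ab_uw] := eqVneq (a, b) (u, w); first by exists [::], s.
by rewrite add0n => /IH[P [R [-> count_R]]]; exists (a :: P), R.
Qed.

Lemma steps_split2 s u w : u != w ->
  1 < count (pred1 (u, w)) (steps s) ->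
  exists P Q R, s = P ++ [:: u, w & Q] ++ [:: u, w & R].
Proof.
move=> uw /[dup] /ltnW /steps_split[P [R [-> ->]]] /steps_split[[|w' Q] [R2 [eqR _]]].
  by case: eqR => wu; rewrite wu eqxx in uw.
by case: eqR => _ ->; exists P, Q, R2.
Qed.

Lemma traversals_cut_loop P u R x y :
  traversals (P ++ [:: u, u & R]) x y = traversals (P ++ u :: R) x y + traverses x y (u, u).
Proof. by rewrite /traversals !steps_cat steps_cons2 !count_cat /=; lia. Qed.

Lemma steps_detour P u w Q R :
  steps (P ++ [:: u, w & Q] ++ [:: u, w & R]) =
  steps (rcons P u) ++ (u, w) :: steps (rcons (w :: Q) u) ++ (u, w) :: steps (w :: R).
Proof.
by rewrite (steps_cat P u) steps_cons2 -[w :: _]/((w :: Q) ++ _) steps_cat steps_cons2.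
Qed.

Lemma steps_reverse_detour P u w Q R :
  steps (P ++ u :: rev Q ++ w :: R) =
  steps (rcons P u) ++ steps (rev (rcons (w :: Q) u)) ++ steps (w :: R).
Proof. by rewrite steps_cat -cat_cons steps_cat rev_rcons rev_cons rcons_cons. Qed.

Lemma traversals_reverse_detour P u w Q R x y :
  traversals (P ++ [:: u, w & Q] ++ [:: u, w & R]) x y =
  traversals (P ++ u :: rev Q ++ w :: R) x y + (traverses x y (u, w)).*2.
Proof.
rewrite /traversals steps_detour steps_reverse_detour !count_cat /= count_cat /=.
rewrite -[count _ (steps (rev _))]/(traversals _ x y) traversals_rev /traversals /=; lia.
Qed.

Lemma overused_edge_repeats s x y :
  2 < traversals s x y -> exists p, traverses x y p /\ 1 < count (pred1 p) (steps s).
Proof.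
have := count_predUI (pred1 (x, y)) (pred1 (y, x)) (steps s).
rewrite -[count (predU _ _) _]/(traversals s x y) => split_xy over_xy.
have [twice_xy | once_xy] := ltnP 1 (count (pred1 (x, y)) (steps s)).
  by exists (x, y); rewrite /traverses eqxx.
by exists (y, x); split; [rewrite /traverses eqxx orbT | lia].
Qed.

Variable e : rel T.

Definition walk s : bool := all [pred p | e p.1 p.2] (steps s).

Lemma walk_path x s : walk (x :: s) = path e x s.
Proof. by elim: s x => [|y s IH] x //; rewrite /walk steps_cons2 /= -IH. Qed.

Lemma walk_cut_loop P u R : walk (P ++ [:: u, u & R]) -> walk (P ++ u :: R).
Proof. by rewrite /walk !steps_cat steps_cons2 !all_cat /= => /and3P[-> _ ->]. Qed.

Hypothesis e_sym : symmetric e.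

Lemma walk_rev s : walk (rev s) = walk s.
Proof.
by rewrite /walk steps_rev all_rev all_map; apply: eq_all => -[a b]; rewrite /= e_sym.
Qed.

Lemma walk_reverse_detour P u w Q R :
  walk (P ++ [:: u, w & Q] ++ [:: u, w & R]) -> walk (P ++ u :: rev Q ++ w :: R).
Proof.
rewrite /walk steps_detour steps_reverse_detour !all_cat /= all_cat.
rewrite -[all _ (steps (rev _))]/(walk _) walk_rev /walk.
by case/and4P=> walk_P _ walk_Q /andP[_ walk_R]; apply/and3P.
Qed.

Lemma shortcut_repeated_step s u w : 1 < count (pred1 (u, w)) (steps s) ->
  exists s', [/\ size s' < size s, walk s -> walk s' &
    forall x y, traversals s' x y <= traversals s x y
                <= traversals s' x y + (traverses x y (u, w)).*2].
Proof.
have [<-|uw] := eqVneq u w => twice.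
  have [P [R [-> _]]] := steps_split (ltnW twice).
  exists (P ++ u :: R); split; first by rewrite !size_cat /= !addnS.
    exact: walk_cut_loop.
  by move=> x y; rewrite traversals_cut_loop; case: (traverses x y (u, u)) => /=; lia.
have [P [Q [R ->]]] := steps_split2 uw twice.
exists (P ++ u :: rev Q ++ w :: R); split.
- by rewrite !size_cat /= size_cat /= size_rev; lia.
- exact: walk_reverse_detour.
- by move=> x y; rewrite traversals_reverse_detour; lia.
Qed.

Lemma walk_traversals_le2 s : walk s ->
  exists s', [/\ walk s', forall x y, (0 < traversals s' x y) = (0 < traversals s x y)
    & forall x y, traversals s' x y <= 2].
Proof.
have [n] := ubnP (size s); elim: n s => // n IH s /ltnSE size_s walk_s.
have [/hasP[[a b] _ /= over_ab] | /hasPn le2] :=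
  boolP (has (fun p => 2 < traversals s p.1 p.2) (steps s)).
  have [[u w] [ab_uw twice_uw]] := overused_edge_repeats over_ab.
  have [s' [lt_s' walk_s' bound]] := shortcut_repeated_step twice_uw.
  have [s'' [walk_s'' supp le2]] := IH s' (leq_trans lt_s' size_s) (walk_s' walk_s).
  exists s''; split => // x y; rewrite supp.
  have /andP[le_s' le_s] := bound x y.
  case xy_uw: (traverses x y (u, w)) in le_s.
    by have := traversals_traverses s xy_uw; rewrite -(traversals_traverses s ab_uw); lia.
  by move: le_s; rewrite addn0; lia.
exists s; split => // x y; rewrite leqNgt; apply/negP => over_xy.
have [p [xy_p twice_p]] := overused_edge_repeats over_xy.
have p_in : p \in steps s by rewrite -has_pred1 has_count; lia.
by have := le2 p p_in; rewrite /= -(traversals_traverses s xy_p) over_xy.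
Qed.

End Walks.

Theorem lemma3 (T : eqType) (e : rel T) (e_sym : symmetric e)
    (v0 : T) (vs : seq T) :
  is_walk e v0 vs ->
  exists (w0 : T) (ws : seq T),
    [/\ is_walk e w0 ws,
        (forall x y, (0 < edge_mult w0 ws x y) = (0 < edge_mult v0 vs x y))
      & (forall x y, edge_mult w0 ws x y <= 2)].
Proof.
rewrite /is_walk -walk_path => /(walk_traversals_le2 e_sym)[[|w0 ws] [walk_ws supp le2]].
  by exists v0, [::]; split => // x y; rewrite -supp.
by exists w0, ws; rewrite -walk_path.
Qed.
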